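(* Let $\sigma\subseteq \overline{M}_{\mathbb R}$ be a reflexive Gorenstein cone of index $r$, and let $\overline N^{(r)}:=\overline N+\frac1r\mathbb Z\, n_\sigma\subseteq \overline N_{\mathbb R}$. Let $\rho$ be a facet of the dual cone $\sigma^\vee$ and let $\mathrm{lin}(\rho)$ be its linear span. Then \[\mathrm{lin}(\rho)\cap \overline N=\mathrm{lin}(\rho)\cap \overline N^{(r)}.\] In particular $\partial\sigma^\vee\cap\overline N=\partial\sigma^\vee\cap \overline N^{(r)}$.
   Context: $\overline M\cong\mathbb Z^{\bar d}$ and $\overline N=\mathrm{Hom}(\overline M,\mathbb Z)$ are dual lattices with pairing $\langle\cdot,\cdot\rangle$, $\overline M_{\mathbb R}=\overline M\otimes\mathbb R$, $\overline N_{\mathbb R}=\overline N\otimes\mathbb R$. For a full-dimensional rational polyhedral cone $\sigma\subseteq\overline M_{\mathbb R}$, its dual cone is $\sigma^\vee=\{y\in\overline N_{\mathbb R}:\langle x,y\rangle\ge0\ \forall x\in\sigma\}$. Such a cone $\sigma$ is a Gorenstein cone if it is generated by finitely many lattice points all lying in an affine hyperplane $\{x:\langle x,n\rangle=1\}$ for some $n\in\overline N$; this $n$ is unique and is denoted $n_\sigma$. The support of $\sigma$ is $\sigma\cap\{x:\langle x,n_\sigma\rangle=1\}$, a lattice polytope with respect to the affine lattice $\overline M\cap\{\langle x,n_\sigma\rangle=1\}$. $\sigma$ is a reflexive Gorenstein cone if $\sigma^\vee$ is also a Gorenstein cone; then $m_{\sigma^\vee}\in\overline M$ denotes the point with $\langle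 m_{\sigma^\vee},y\rangle=1$ for all lattice generators $y$ of $\sigma^\vee$, and the index of $\sigma$ is $r=\langle m_{\sigma^\vee},n_\sigma\rangle$. *)

From HB Require Import structures.
From mathcomp Require Import all_boot all_order all_algebra.
Set Implicit Arguments. Unset Strict Implicit. Unset Printing Implicit Defensive.
Import Order.TTheory GRing.Theory Num.Theory.
Local Open Scope ring_scope.

(* M_R and N_R are both modelled as row vectors 'rV[R]_d, with the lattices
   M, N being the integer points, and the standard pairing. *)
Section GorensteinDefs.
Context {R : archiRealFieldType} {d : nat}.

Definition pair (x y : 'rV[R]_d) : R := \sum_(i < d) x 0 i * y 0 i.

Definition lattice (x : 'rV[R]_d) : Prop := forall i, x 0 i \is a Num.int.

Definition in_cone (gens : seq 'rV[R]_d) (x : 'rV[R]_d) : Prop :=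
  exists c : 'I_(size gens) -> R,
    (forall i, 0 <= c i) /\ x = \sum_(i < size gens) c i *: gens`_i.

Definition dual_cone (S : 'rV[R]_d -> Prop) (y : 'rV[R]_d) : Prop :=
  forall x, S x -> 0 <= pair x y.

Definition gorenstein_cone (S : 'rV[R]_d -> Prop) (gens : seq 'rV[R]_d)
    (n : 'rV[R]_d) : Prop :=
  [/\ forall x, S x <-> in_cone gens x,
      forall g, g \in gens -> lattice g /\ pair g n = 1,
      lattice n &
      \dim <<gens>>%VS = d].

Definition lin (S : 'rV[R]_d -> Prop) (y : 'rV[R]_d) : Prop :=
  exists s : seq 'rV[R]_d, (forall x, x \in s -> S x) /\ y \in <<s>>%VS.

Definition is_facet (C rho : 'rV[R]_d -> Prop) : Prop :=
  exists u : 'rV[R]_d,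
    [/\ u != 0,
        forall y, C y -> 0 <= pair u y,
        forall y, rho y <-> (C y /\ pair u y = 0) &
        exists s : seq 'rV[R]_d,
          (forall x, x \in s -> rho x) /\ \dim <<s>>%VS = d.-1].

Definition lattice_r (r : R) (n y : 'rV[R]_d) : Prop :=
  exists k : int, lattice (y - (k%:~R / r) *: n).

Definition boundary (C : 'rV[R]_d -> Prop) (y : 'rV[R]_d) : Prop :=
  C y /\ ~ (exists e : R, 0 < e /\
              forall z : 'rV[R]_d, (forall i, `|z 0 i - y 0 i| < e) -> C z).

End GorensteinDefs.

From HB Require Import structures.
From mathcomp Require Import all_boot all_order all_algebra.
From mathcomp Require Import lra.
Set Implicit Arguments. Unset Strict Implicit. Unset Printing Implicit Defensive.
Import Order.TTheory GRing.Theory Num.Theory.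
Local Open Scope ring_scope.

(* Facets of the dual cone, and more generally its boundary points, are
   annihilated by some generator g of sigma, i.e. lie in g^⊥.  Since
   <g, n_sigma> = 1 and g is integral, pairing a decomposition
   y = w + (k/r) n_sigma with w integral against g shows that k/r is an
   integer, so y is integral. *)

Section Pairing.
Variables (R : archiRealFieldType) (d : nat).
Implicit Types (x y z u g : 'rV[R]_d).

Lemma pairC x y : pair x y = pair y x.
Proof. by apply: eq_bigr => i _; rewrite mulrC. Qed.

Lemma pair0r x : pair x 0 = 0.
Proof. by rewrite /pair big1 // => i _; rewrite mxE mulr0. Qed.

Lemma pairDr x y z : pair x (y + z) = pair x y + pair x z.
Proof. by rewrite /pair -big_split; apply: eq_bigr => i _; rewrite mxE mulrDr. Qed.

Lemma pairBr x y z : pair x (y - z) = pair x y - pair x z.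
Proof. by rewrite /pair -sumrB; apply: eq_bigr => i _; rewrite !mxE mulrBr. Qed.

Lemma pairZr x a y : pair x (a *: y) = a * pair x y.
Proof. by rewrite /pair mulr_sumr; apply: eq_bigr => i _; rewrite mxE mulrCA. Qed.

Lemma pair_sumr x (I : Type) (t : seq I) (P : pred I) (F : I -> 'rV[R]_d) :
  pair x (\sum_(i <- t | P i) F i) = \sum_(i <- t | P i) pair x (F i).
Proof. exact: (big_morph (pair x) (pairDr x) (pair0r x)). Qed.

Lemma pair_int x y : lattice x -> lattice y -> pair x y \is a Num.int.
Proof. by move=> hx hy; apply: rpred_sum => i _; apply: rpredM. Qed.

Lemma pair_self_gt0 u : u != 0 -> 0 < pair u u.
Proof.
move=> hu; have [i hi] : exists i, u 0 i != 0.
  apply/existsP; apply: contraNT hu; rewrite negb_exists => /forallP h.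
  by apply/eqP/rowP => i; rewrite mxE; move: (h i); rewrite negbK => /eqP.
rewrite /pair (bigD1 i) //=; apply: ltr_pwDl; first by rewrite -expr2 exprn_even_gt0.
by apply: sumr_ge0 => j _; rewrite -expr2 sqr_ge0.
Qed.

End Pairing.

Section SupBall.
Variables (R : archiRealFieldType) (d : nat).
Implicit Types (y z u g : 'rV[R]_d).

Definition norm1 u : R := \sum_i `|u 0 i|.

Definition sup_ball y (e : R) z : Prop := forall i, `|z 0 i - y 0 i| < e.

Lemma norm1_ge0 u : 0 <= norm1 u.
Proof. exact: sumr_ge0. Qed.

Lemma coord_le_norm1 u i : `|u 0 i| <= norm1 u.
Proof. by rewrite /norm1 (bigD1 i) //= lerDl; apply: sumr_ge0. Qed.

Lemma sup_ball_le y e1 e2 z : e1 <= e2 -> sup_ball y e1 z -> sup_ball y e2 z.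
Proof. by move=> le12 hz i; apply: lt_le_trans le12. Qed.

Lemma pair_sup_ball g y e z :
  sup_ball y e z -> `|pair g z - pair g y| <= norm1 g * e.
Proof.
move=> hz; rewrite -pairBr /norm1 mulr_suml.
apply: le_trans (ler_norm_sum _ _ _) _; apply: ler_sum => i _.
by rewrite normrM mxE ler_wpM2l // mxE ltW.
Qed.

(* The radius is chosen so that norm1 g times it stays below <g, y>. *)
Lemma pair_gt0_near g y : 0 < pair g y ->
  exists2 e : R, 0 < e & forall z, sup_ball y e z -> 0 < pair g z.
Proof.
move=> gy0; have S0 : 0 < 1 + norm1 g by have := norm1_ge0 g; lra.
have e0 : 0 < pair g y / (1 + norm1 g) by rewrite divr_gt0.
exists (pair g y / (1 + norm1 g)) => // z /(pair_sup_ball g) hz.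
set e := _ / _ in e0 hz.
have he : pair g y = e + norm1 g * e.
  by rewrite -{1}(mul1r e) -mulrDl /e [RHS]mulrC divfK // gt_eqF.
have := ler_norml (pair g z - pair g y) (norm1 g * e); rewrite hz => /esym/andP[].
lra.
Qed.

Lemma pairs_gt0_near (l : seq 'rV[R]_d) y :
  (forall g, g \in l -> 0 < pair g y) ->
  exists2 e : R, 0 < e & forall z, sup_ball y e z -> forall g, g \in l -> 0 < pair g z.
Proof.
elim: l => [|g l IHl] hl; first by exists 1.
have [e1 e10 h1] := pair_gt0_near (hl g (mem_head _ _)).
have [e2 e20 h2] : exists2 e : R, 0 < e &
    forall z, sup_ball y e z -> forall g, g \in l -> 0 < pair g z.
  by apply: IHl => g' hg'; apply: hl; rewrite in_cons hg' orbT.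
exists (Order.min e1 e2) => [|z hz g']; first by rewrite lt_min e10 e20.
rewrite in_cons => /orP[/eqP -> | hg'].
  by apply: h1; apply: sup_ball_le hz; rewrite ge_min lexx.
by apply: h2 => //; apply: sup_ball_le hz; rewrite ge_min lexx orbT.
Qed.

Lemma sup_ball_shift y u (e : R) : 0 < e ->
  exists2 eps : R, 0 < eps & sup_ball y e (y - eps *: u).
Proof.
move=> e0; have S0 : 0 < 1 + norm1 u by have := norm1_ge0 u; lra.
have eps0 : 0 < e / (1 + norm1 u) by rewrite divr_gt0.
exists (e / (1 + norm1 u)) => // i; set eps := _ / _ in eps0 *.
have he : e = eps + norm1 u * eps.
  by rewrite -{1}(mul1r eps) -mulrDl /eps [RHS]mulrC divfK // gt_eqF.
rewrite !mxE addrAC subrr add0r normrN normrM (gtr0_norm eps0).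
have : eps * `|u 0 i| <= eps * norm1 u by rewrite ler_wpM2l ?coord_le_norm1 ?ltW.
rewrite [eps * norm1 u]mulrC; lra.
Qed.

(* A point on a supporting hyperplane u^⊥ of C is a limit of the points
   y - eps u, which lie strictly on the wrong side of the hyperplane. *)
Lemma supporting_hyperplane_boundary (C : 'rV[R]_d -> Prop) u y :
  u != 0 -> (forall z, C z -> 0 <= pair u z) -> C y -> pair u y = 0 ->
  boundary C y.
Proof.
move=> u0 uC Cy uy; split=> // -[e [e0 he]].
have [eps eps0 /he /uC] := sup_ball_shift y u e0.
rewrite pairBr pairZr uy sub0r oppr_ge0 leNgt => /negP; apply.
by rewrite mulr_gt0 // pair_self_gt0.
Qed.

End SupBall.

Section DualCone.
Variables (R : archiRealFieldType) (d : nat).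
Variables (sigma : 'rV[R]_d -> Prop) (gens : seq 'rV[R]_d).
Hypothesis sigmaE : forall x, sigma x <-> in_cone gens x.
Implicit Types (y z g : 'rV[R]_d).

Lemma in_cone_gen g : g \in gens -> in_cone gens g.
Proof.
move=> hg; pose i0 : 'I_(size gens) := Ordinal (etrans (index_mem g gens) hg).
exists (fun i => (i == i0)%:R); split=> [i|]; first by case: (i == i0).
rewrite (bigD1 i0) //= eqxx scale1r big1 ?addr0 ?nth_index //.
by move=> i /negbTE ->; rewrite scale0r.
Qed.

Lemma dual_coneP z :
  dual_cone sigma z <-> forall g, g \in gens -> 0 <= pair g z.
Proof.
split=> [hz g hg | hg x /sigmaE [c [c0 ->]]]; first by apply/hz/sigmaE/in_cone_gen.
rewrite pairC pair_sumr; apply: sumr_ge0 => i _.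
by rewrite pairZr pairC mulr_ge0 // hg // mem_nth.
Qed.

Lemma dual_coneD y z :
  dual_cone sigma y -> dual_cone sigma z -> dual_cone sigma (y + z).
Proof. by move=> hy hz x sx; rewrite pairDr addr_ge0 ?hy ?hz. Qed.

Lemma boundary_dual_cone_orth y :
  boundary (dual_cone sigma) y -> exists2 g, g \in gens & pair g y = 0.
Proof.
case=> hy hint.
have [/hasP[g hg /eqP gy] | /hasPn gy] := boolP (has (fun g => pair g y == 0) gens).
  by exists g.
exfalso; apply: hint.
have [e e0 he] : exists2 e : R, 0 < e &
    forall z, sup_ball y e z -> forall g, g \in gens -> 0 < pair g z.
  apply: pairs_gt0_near => g hg.
  by rewrite lt_def gy //; move/dual_coneP: hy; apply.
by exists e; split=> // z /he hz; apply/dual_coneP => g /hz /ltW.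
Qed.

Lemma face_dual_cone_sum (rho : 'rV[R]_d -> Prop) u (s : seq 'rV[R]_d) :
  (forall y, rho y <-> dual_cone sigma y /\ pair u y = 0) ->
  (forall x, x \in s -> rho x) -> rho (\sum_(x <- s) x).
Proof.
move=> rhoE; elim: s => [|a s IHs] srho.
  by rewrite big_nil; apply/rhoE; split=> [x _|]; rewrite pair0r.
have /rhoE[da ua] := srho a (mem_head _ _).
have /rhoE[ds us] : rho (\sum_(x <- s) x).
  by apply: IHs => x xs; apply: srho; rewrite in_cons xs orbT.
rewrite big_cons; apply/rhoE; split; first exact: dual_coneD.
by rewrite pairDr ua us addr0.
Qed.

(* The sum y0 of a spanning family of a facet lies on the facet, hence on the
   boundary; a generator orthogonal to y0 is orthogonal to each summand (all
   pairings are nonnegative), hence to the whole span. *)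
Lemma lin_facet_dual_cone_orth rho y :
  is_facet (dual_cone sigma) rho -> lin rho y ->
  exists2 g, g \in gens & pair g y = 0.
Proof.
move=> [u [u0 hu rhoE _]] [s [srho ys]].
have rho_y0 := face_dual_cone_sum rhoE srho.
set y0 := \sum_(x <- s) x in rho_y0; have /rhoE[dy0 uy0] := rho_y0.
have [g hg gy0] := boundary_dual_cone_orth
  (supporting_hyperplane_boundary u0 hu dy0 uy0).
have gs : forall x, x \in s -> pair g x = 0.
  have gs_ge0 : forall x, x \in s -> 0 <= pair g x.
    by move=> x /srho /rhoE[/dual_coneP dx _]; apply: dx.
  move: gy0; rewrite /y0 pair_sumr big_seq => /eqP.
  rewrite psumr_eq0 // => /allP gs x xs.
  by move: (gs x xs); rewrite xs => /eqP.
exists g => //; rewrite (coord_span (X := in_tuple s) ys) pair_sumr big1 // => i _.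
by rewrite pairZr gs ?mulr0 // mem_nth.
Qed.

End DualCone.

Section RefinedLattice.
Variables (R : archiRealFieldType) (d : nat).
Implicit Types (y g n : 'rV[R]_d).

Lemma lattice_lattice_r (r : R) n y : lattice y -> lattice_r r n y.
Proof. by move=> hy; exists 0; rewrite mulr0z mul0r scale0r subr0. Qed.

Lemma lattice_r_orth_lattice (r : R) g n y :
  lattice g -> pair g n = 1 -> lattice n ->
  pair g y = 0 -> lattice_r r n y -> lattice y.
Proof.
move=> lg gn ln gy [k hw]; set c := k%:~R / r in hw; set w := y - c *: n in hw.
have yE : y = w + c *: n by rewrite /w subrK.
have c_int : c \is a Num.int.
  suff -> : c = - pair g w by rewrite rpredN pair_int.
  by apply/eqP; rewrite -addr_eq0 -[c]mulr1 -gn -pairZr -pairDr addrC -yE gy.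
by clearbody w c; move=> i; rewrite yE !mxE rpredD ?rpredM ?hw.
Qed.

End RefinedLattice.

Theorem proposition1p12 (R : archiRealFieldType) (d : nat)
    (sigma : 'rV[R]_d -> Prop) (gens gens' : seq 'rV[R]_d) (n m : 'rV[R]_d) :
  gorenstein_cone sigma gens n ->
  gorenstein_cone (dual_cone sigma) gens' m ->
  let r := pair m n in
  (forall rho : 'rV[R]_d -> Prop, is_facet (dual_cone sigma) rho ->
     forall y : 'rV[R]_d,
       (lin rho y /\ lattice y) <-> (lin rho y /\ lattice_r r n y)) /\
  (forall y : 'rV[R]_d,
     (boundary (dual_cone sigma) y /\ lattice y) <->
     (boundary (dual_cone sigma) y /\ lattice_r r n y)).
Proof.
(* Only sigma being Gorenstein matters: the claim holds for every r. *)
move=> [sigmaE gensP ln _] _ r.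
have orth_lattice y : (exists2 g, g \in gens & pair g y = 0) ->
    lattice_r r n y -> lattice y.
  by case=> g /gensP[lg gn] gy; apply: lattice_r_orth_lattice lg gn ln gy.
split=> [rho rho_facet|] y; split=> -[hy yl]; split=> //;
  (try exact: lattice_lattice_r); apply: orth_lattice yl.
- exact: (lin_facet_dual_cone_orth sigmaE rho_facet hy).
- exact: (boundary_dual_cone_orth sigmaE hy).
Qed.
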